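(* If $(T,X)$ is a uniformly left-syndetically stable compact flow ($T$ a Hausdorff topological group, $X$ compact Hausdorff), then $(T,X)$ is an a.p. flow.
   Context: $\mathscr U_X$ is the uniformity of $X$; for $A\subseteq T$ and $\delta\in\mathscr U_X$, $A\delta=\{(ax,ay):a\in A,(x,y)\in\delta\}$. $A\subseteq T$ is left-syndetic if there is a compact $K\subseteq T$ with $A\cap tK\neq\emptyset$ for all $t\in T$; $A$ is (right) syndetic if there is compact $K$ with $Kt\cap A\neq\emptyset$ for all $t$. $(T,X)$ is uniformly left-syndetically stable if for every $\varepsilon\in\mathscr U_X$ there exist $\delta\in\mathscr U_X$ and a left-syndetic $A\subseteq T$ with $A\delta\subseteq\varepsilon$. A flow is an a.p. flow if for every $\alpha\in\mathscr U_X$ there is a syndetic $A\subseteq T$ with $Ax\subseteq\alpha[x]$ for all $x\in X$. *)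

From HB Require Import structures.
From mathcomp Require Import all_boot all_order all_algebra.
From mathcomp Require Import all_classical all_reals all_analysis.
Set Implicit Arguments. Unset Strict Implicit. Unset Printing Implicit Defensive.
Local Open Scope classical_set_scope.

Definition is_topological_group (T : topologicalType)
    (mul : T -> T -> T) (inv : T -> T) (e : T) : Prop :=
  [/\ (forall a b c, mul a (mul b c) = mul (mul a b) c),
      (forall a, mul e a = a /\ mul a e = a),
      (forall a, mul (inv a) a = e /\ mul a (inv a) = e),
      continuous (fun p : T * T => mul p.1 p.2)
    & continuous inv].

Definition is_flow (T X : topologicalType) (mul : T -> T -> T) (e : T)
    (act : T -> X -> X) : Prop :=
  [/\ continuous (fun p : T * X => act p.1 p.2),
      (forall x, act e x = x)
    & (forall s t x, act (mul s t) x = act s (act t x))].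

Definition left_syndetic (T : topologicalType) (mul : T -> T -> T)
    (A : set T) : Prop :=
  exists K : set T, compact K /\
    forall t, A `&` [set mul t k | k in K] !=set0.

Definition syndetic (T : topologicalType) (mul : T -> T -> T)
    (A : set T) : Prop :=
  exists K : set T, compact K /\
    forall t, [set mul k t | k in K] `&` A !=set0.

Definition unif_left_synd_stable (T : topologicalType) (X : uniformType)
    (mul : T -> T -> T) (act : T -> X -> X) : Prop :=
  forall eps : set (X * X), entourage eps ->
    exists delta : set (X * X), entourage delta /\
      exists A : set T, left_syndetic mul A /\
        forall a x y, A a -> delta (x, y) -> eps (act a x, act a y).

Definition ap_flow (T : topologicalType) (X : uniformType)
    (mul : T -> T -> T) (act : T -> X -> X) : Prop :=
  forall alpha : set (X * X), entourage alpha ->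
    exists A : set T, syndetic mul A /\
      forall x a, A a -> alpha (x, act a x).

From mathcomp Require Import all_boot all_order all_algebra.
From mathcomp Require Import all_classical all_reals all_analysis.
From mathcomp Require Import finmap.
Set Implicit Arguments. Unset Strict Implicit.
Local Open Scope classical_set_scope.

(* Fix an entourage alpha and a symmetric entourage eps such that any
   four-step eps-chain joins alpha-close points.  Stability yields delta and a left-syndetic
   A such that the maps act a, a in A, send delta-close points to
   eps-close points.  Since X is compact it has finite delta- and eps-nets,
   and recording, for a in A, which eps-net point is near each a s (s in the
   delta-net) sorts A into finitely many classes; two members a, b of one
   class are uniformly alpha-close (lemma equicontinuous_finite_approx).
   Hence a finite F approximates A, and for b in F approximating a in A
   the element b a^-1 moves no point further than alpha (lemma
   close_maps_translate).  Finally, if A meets every tK with K compact, then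
   for each t some a = t^-1 k lies in A, and b a^-1 = (b k^-1) t lies in
   (F K^-1) t; so these elements form a syndetic set
   (lemma left_syndetic_approx_syndetic). *)

Lemma compact_finite_net (X : uniformType) (D : set (X * X)) :
  compact [set: X] -> entourage D ->
  exists S : {fset X}, forall x, exists s : S, D (val s, x).
Proof.
move=> /compact_near_coveringP cX eD.
pose F := filter_from [set: {fset X}]
  (fun A : {fset X} => [set S : {fset X} | (A `<=` S)%fset]).
have FF : Filter F.
  apply: filter_from_filter; first by exists fset0.
  move=> A B _ _; exists (A `|` B)%fset => // S /= HS; split.
    exact: fsubset_trans (fsubsetUl _ _) HS.
  exact: fsubset_trans (fsubsetUr _ _) HS.
have [x _|A _ HA] := cX {fset X} F (fun S x' => exists2 s, s \in S & D (s, x')) FF.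
  near=> x' S; exists x; last first.
    by apply/xsectionP; near: x'; exact: nbhs_entourage.
  rewrite /= -fsub1set; near: S; by exists [fset x]%fset.
exists A => x; have [s sA Ds] := HA A (fsubset_refl _) x I.
by exists (FSetSub sA).
Unshelve. all: by end_near.
Qed.

Lemma equicontinuous_finite_approx (X : uniformType) (I : Type)
    (h : I -> X -> X) (P : set I) (alpha eps delta : set (X * X)) :
  compact [set: X] -> entourage alpha -> entourage eps -> entourage delta ->
  (forall x y, eps (x, y) -> eps (y, x)) ->
  eps `<=` split_ent (split_ent alpha) ->
  (forall i x y, P i -> delta (x, y) -> eps (h i x, h i y)) ->
  exists F : set I, [/\ finite_set F, F `<=` P &
    forall i, P i -> exists2 j, F j & forall y, alpha (h i y, h j y)].
Proof.
move=> cX ealpha eeps edelta eps_sym eps_small equi.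
have [S netS] := compact_finite_net cX edelta.
have [E netE] := compact_finite_net cX eeps.
have [f hf] := choice (fun p : I * S => netE (h p.1 (val p.2))).
(* The code of i records an eps-net point near h i s for each s in S. *)
pose code (i : I) : {ffun S -> E} := [ffun s => f (i, s)].
have same_code_close i j : P i -> P j -> code i = code j ->
    forall y, alpha (h i y, h j y).
  move=> Pi Pj cij y; have [s Dsy] := netS y.
  have fij : f (i, s) = f (j, s).
    by have := congr1 (fun g : {ffun S -> E} => g s) cij; rewrite !ffunE.
  have near_i := eps_small _ (eps_sym _ _ (hf (i, s))).
  have near_j := eps_small _ (hf (j, s)).
  have i_y := eps_small _ (eps_sym _ _ (equi i _ _ Pi Dsy)).
  have j_y := eps_small _ (equi j _ _ Pj Dsy).
  rewrite /= fij in near_i.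
  apply: (entourage_split (val (f (j, s)))) => //.
    exact: (entourage_split (h i (val s))).
  exact: (entourage_split (h j (val s))).
have [->|/set0P [i0 Pi0]] := eqVneq P set0.
  by exists set0; split => // i.
have represented c : exists j, P j /\
    ((exists i, P i /\ code i = c) -> code j = c).
  have [[i [Pi ci]]|nc] := pselect (exists i, P i /\ code i = c).
    by exists i.
  by exists i0; split => // ?; exfalso.
have [rep hrep] := choice represented.
exists (range rep); split.
- by apply: finite_image; exact: finite_finset.
- by move=> _ [c _ <-]; exact: (hrep c).1.
- move=> i Pi; exists (rep (code i)); first by exists (code i).
  have [Prep crep] := hrep (code i).
  by apply: same_code_close => //; rewrite crep //; exists i.
Qed.

Section GroupLemmas.
Variables (T : topologicalType) (mul : T -> T -> T) (inv : T -> T) (e : T).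
Hypothesis mulA : forall a b c, mul a (mul b c) = mul (mul a b) c.
Hypothesis mul_id : forall a, mul e a = a /\ mul a e = a.
Hypothesis mul_inv : forall a, mul (inv a) a = e /\ mul a (inv a) = e.

Lemma invM a b : inv (mul a b) = mul (inv b) (inv a).
Proof.
have prod_inv : mul (mul a b) (mul (inv b) (inv a)) = e.
  by rewrite -mulA (mulA b) (mul_inv b).2 (mul_id _).1 (mul_inv a).2.
set z := mul (inv b) (inv a).
by rewrite -[inv _](mul_id _).2 -prod_inv mulA (mul_inv _).1 (mul_id z).1.
Qed.

Lemma invK a : inv (inv a) = a.
Proof.
rewrite -[inv (inv a)](mul_id _).2 -(mul_inv a).1 mulA.
by rewrite (mul_inv _).1 (mul_id a).1.
Qed.

Hypothesis mul_cont : continuous (fun p : T * T => mul p.1 p.2).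
Hypothesis inv_cont : continuous inv.

(* If A is left-syndetic and a finite F approximates A in the sense that
   B contains some b a^-1 (b in F) for each a in A, then B is syndetic:
   the compact set F K^-1 works, K a compact witness for A. *)
Lemma left_syndetic_approx_syndetic (A B F : set T) :
  left_syndetic mul A -> finite_set F ->
  (forall a, A a -> exists2 b, F b & B (mul b (inv a))) ->
  syndetic mul B.
Proof.
move=> [K [cK hK]] fF approx.
exists [set mul p.1 p.2 | p in F `*` (inv @` K)]; split.
  apply: continuous_compact; first exact: continuous_subspaceT.
  apply: compact_setX; first exact: finite_compact.
  by apply: continuous_compact => //; exact: continuous_subspaceT.
move=> t; have [a [Aa [k Kk ka]]] := hK (inv t).
have [b Fb Bba] := approx a Aa.
exists (mul (mul b (inv k)) t); split.
  by exists (mul b (inv k)) => //; exists (b, inv k) => //; split => //; exists k.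
by rewrite -mulA -[t in mul _ (mul _ t)]invK -invM ka.
Qed.

End GroupLemmas.

Lemma close_maps_translate (T X : topologicalType) (mul : T -> T -> T)
    (inv : T -> T) (e : T) (act : T -> X -> X) (alpha : set (X * X)) a b :
  mul a (inv a) = e -> is_flow mul e act ->
  (forall y, alpha (act a y, act b y)) ->
  forall x, alpha (x, act (mul b (inv a)) x).
Proof.
move=> aVa [_ act_e act_m] close x.
have {1}-> : x = act a (act (inv a) x) by rewrite -act_m aVa act_e.
by rewrite act_m; exact: close.
Qed.

Theorem corollary2 (T : topologicalType) (X : uniformType)
    (mul : T -> T -> T) (inv : T -> T) (e : T) (act : T -> X -> X) :
  is_topological_group mul inv e -> hausdorff_space T ->
  compact [set: X] -> hausdorff_space X ->
  is_flow mul e act ->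
  unif_left_synd_stable mul act ->
  ap_flow mul act.
Proof.
move=> [mulA mul_id mul_inv mul_cont inv_cont] _ cX _ flow stab alpha ealpha.
pose eta : set (X * X) := split_ent (split_ent alpha).
have eeta : entourage eta by do 2 apply: entourage_split_ent.
pose eps := eta `&` eta^-1%relation.
have [delta [edelta [A [synA equi]]]] := stab eps (entourage_invI eeta).
have eps_sym (x y : X) : eps (x, y) -> eps (y, x).
  by move=> [exy eyx]; split.
have [F [fF _ approx]] := equicontinuous_finite_approx cX ealpha
  (entourage_invI eeta) edelta eps_sym (@subIsetl _ _ _) equi.
exists [set t | forall x, alpha (x, act t x)]; split; last by move=> x a; apply.
apply: (left_syndetic_approx_syndetic mulA mul_id mul_inv mul_cont inv_cont
  synA fF) => a Aa.
have [b Fb close] := approx a Aa.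
by exists b => //; exact: close_maps_translate (mul_inv a).2 flow close.
Qed.
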